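(* Let $G$ be a topological gyrogroup and let $\phi:G\to\mathbb{R}$ be a continuous bounded function. Then there is a bounded continuous function $\Phi:G^{\bullet}\to\mathbb{R}$ with $\Phi(x^{\bullet})=\phi(x)$ for all $x\in G$, where $x^{\bullet}$ is the constant function with value $x$.
   Context: A gyrogroup is a set $G$ with a binary operation $\oplus$ such that: (G1) there is a unique identity $0$ with $0\oplus a=a=a\oplus 0$; (G2) each $x$ has a unique inverse $\ominus x$ with $\ominus x\oplus x=0=x\oplus(\ominus x)$; (G3) for all $x,y$ there is an automorphism $\mathrm{gyr}[x,y]$ of $(G,\oplus)$ with $x\oplus(y\oplus z)=(x\oplus y)\oplus \mathrm{gyr}[x,y](z)$ for all $z$; (G4) $\mathrm{gyr}[x\oplus y,y]=\mathrm{gyr}[x,y]$. A topological gyrogroup is a gyrogroup with a topology (all spaces are assumed $T_1$) such that $\oplus$ is jointly continuous and $x\mapsto\ominus x$ is continuous. Construction: let $J=[0,1)$ and let $G^{\bullet}$ be the set of all functions $f:J\to G$ for which there exist $0=a_0<a_1<\dots<a_n=1$ with $f$ constant on each $[a_k,a_{k+1})$, with pointwise operation $(f\oplus^{\bullet}g)(r)=f(r)\oplus g(r)$. For an open neighbourhood $V$ of $0$ in $G$ and $\varepsilon>0$ let $O(V,\varepsilon)=\{f\in G^{\bullet}:\mu(\{r\in J: f(r)\notin V\})<\varepsilon\}$, $\mu$ Lebesgue measure. $G^{\bullet}$ carries the topological gyrogroup topology in which the sets $f\oplus^{\bullet}O(V,\varepsilon)$ form a local base at each $f\in G^{\bullet}$.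 *)

From HB Require Import structures.
From mathcomp Require Import all_boot all_order all_algebra.
From mathcomp Require Import all_classical all_reals all_analysis.
Set Implicit Arguments. Unset Strict Implicit. Unset Printing Implicit Defensive.
Import Order.TTheory GRing.Theory Num.Theory.
Import numFieldNormedType.Exports.
Local Open Scope classical_set_scope.
Local Open Scope ring_scope.

Definition is_gyrogroup (G : Type) (op : G -> G -> G) (e : G) (inv : G -> G) : Prop :=
  (forall a, op e a = a /\ op a e = a) /\
  (forall e', (forall a, op e' a = a /\ op a e' = a) -> e' = e) /\
  (forall x, op (inv x) x = e /\ op x (inv x) = e) /\
  (forall x y, op y x = e /\ op x y = e -> y = inv x) /\
  (exists gyr : G -> G -> G -> G,
     (forall x y, bijective (gyr x y) /\
                  (forall a b, gyr x y (op a b) = op (gyr x y a) (gyr x y b))) /\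
     (forall x y z, op x (op y z) = op (op x y) (gyr x y z)) /\
     (forall x y, gyr (op x y) y = gyr x y)).

Definition is_top_gyrogroup (G : topologicalType) (op : G -> G -> G) (e : G)
    (inv : G -> G) : Prop :=
  is_gyrogroup op e inv /\ accessible_space G /\
  continuous (fun p : G * G => op p.1 p.2) /\ continuous inv.

Definition J (R : realType) := {r : R | (0 <= r < 1)%R}.

Definition is_step (R : realType) (G : Type) (f : J R -> G) : Prop :=
  exists (n : nat) (a : nat -> R),
    a 0%N = 0 /\ a n = 1 /\ (forall k, (k < n)%N -> a k < a k.+1) /\
    (forall k (r s : J R), (k < n)%N ->
        a k <= sval r < a k.+1 -> a k <= sval s < a k.+1 -> f r = f s).

Definition Gbul (R : realType) (G : Type) := {f : J R -> G | is_step f}.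

Lemma const_is_step (R : realType) (G : Type) (x : G) :
  is_step (fun _ : J R => x).
Proof.
exists 1%N, (fun k => k%:R); split; first by [].
split; first by [].
split; last by [].
by move=> k; rewrite ltnS leqn0 => /eqP ->; rewrite ltr01.
Qed.

Definition cbul (R : realType) (G : Type) (x : G) : Gbul R G :=
  exist _ (fun _ => x) (const_is_step R x).

Definition in_O (R : realType) (G : Type) (V : set G) (eps : R) (f : Gbul R G) : Prop :=
  (lebesgue_measure (sval @` [set j : J R | ~ V (sval f j)]) < eps%:E)%E.

(* Continuity of Phi : G^bullet -> R at every point, w.r.t. the topology whose
   local base at f is { f (+) O(V, eps) : V open nbhd of e in G, eps > 0 },
   where (+) is the pointwise operation. *)
Definition Gbul_continuous (R : realType) (G : topologicalType)
    (op : G -> G -> G) (e : G) (Phi : Gbul R G -> R) : Prop :=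
  forall (f : Gbul R G) (delta : R), 0 < delta ->
    exists (V : set G) (eps : R),
      open V /\ V e /\ 0 < eps /\
      forall g h : Gbul R G,
        in_O V eps g ->
        (forall j, sval h j = op (sval f j) (sval g j)) ->
        `|Phi h - Phi f| < delta.

From HB Require Import structures.
From mathcomp Require Import all_boot all_order all_algebra.
From mathcomp Require Import all_classical all_reals all_analysis.
From mathcomp Require Import measurable_realfun lra.
Set Implicit Arguments. Unset Strict Implicit. Unset Printing Implicit Defensive.
Import Order.TTheory GRing.Theory Num.Theory.
Import numFieldNormedType.Exports.
Local Open Scope classical_set_scope.
Local Open Scope ring_scope.

(* The extension is the mean value  Phi(f) = \int_0^1 phi(f(r)) dr.
   - A step function f : J -> T takes finitely many values and all its
     preimages are finite unions of intervals, hence Lebesgue measurable;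
     realising f on the real line as r |-> f(r) on [0,1) makes phi o f a
     bounded measurable, hence integrable, function on [0,1).
   - On constant functions the mean is phi(x), and |Phi| <= sup|phi|.
   - Continuity: given delta, continuity of v |-> phi(x (+) v) at the identity 0
     for the finitely many values x of f yields one open V containing 0 where all
     these oscillations are < delta/2.  If g lies in O(V, eps) then
     |phi(f(r) (+) g(r)) - phi(f(r))| is < delta/2 off the set B where
     g(r) \notin V, and <= 2 sup|phi| on B; integrating gives
     |Phi(f (+) g) - Phi(f)| <= delta/2 + 2 sup|phi| mu(B) < delta for eps small.
   The file treats partitions and step functions first, then their
   realisation on the real line together with an integral estimate, then the
   mean [step_mean] and its three properties, which give the theorem. *)

Section Partitions.
Variable R : realType.
Variables (n : nat) (a : nat -> R).
Hypothesis a_incr : forall k, (k < n)%N -> a k < a k.+1.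

Lemma partition_mono i j : (i <= j <= n)%N -> a i <= a j.
Proof.
case/andP; elim: j => [|j IH]; first by rewrite leqn0 => /eqP ->.
rewrite leq_eqVlt => /orP[/eqP -> //|]; rewrite ltnS => ij jn.
exact: le_trans (IH ij (ltnW jn)) (ltW (a_incr jn)).
Qed.

Hypotheses (a0 : a 0%N = 0) (an : a n = 1).

Lemma partition_cell_bounds k : (k < n)%N -> 0 <= a k /\ a k.+1 <= 1.
Proof.
move=> kn; rewrite -a0 -an; split; apply: partition_mono.
  by rewrite leq0n ltnW.
by rewrite kn leqnn.
Qed.

Lemma partition_cover x : 0 <= x < 1 -> exists k, (k < n)%N /\ a k <= x < a k.+1.
Proof.
case/andP=> x0 x1.
suff cover m : x < a m -> exists k, (k < m)%N /\ a k <= x < a k.+1.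
  by apply: cover; rewrite an.
elim: m => [|m IH]; first by rewrite a0 ltNge x0.
move=> xm; have [xm'|mx] := ltP x (a m); last by exists m; rewrite mx xm.
by have [k [km kx]] := IH xm'; exists k; rewrite ltnW.
Qed.

End Partitions.

Lemma J_zero_proof (R : realType) : (0 : R) <= (0 : R) < (1 : R).
Proof. by rewrite lexx ltr01. Qed.
Definition J_zero (R : realType) : J R := exist _ 0 (J_zero_proof R).

Definition to_J (R : realType) (x : R) : J R := insubd (J_zero R) x.

Section StepFunctions.
Variables (R : realType) (T : Type) (f : Gbul R T).

(* Every preimage of a step function is a Lebesgue measurable subset of R:
   it is the union of the cells on which f takes a value in P. *)
Lemma step_preimage_measurable (P : set T) :
  measurable (sval @` [set j : J R | P (sval f j)]).
Proof.
case: (svalP f) => n [a [a0 [an [ainc acst]]]].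
pose hit k := (k < n)%N /\ exists j : J R, a k <= sval j < a k.+1 /\ P (sval f j).
pose cell k := [set x : R | hit k /\ a k <= x < a k.+1].
have -> : sval @` [set j : J R | P (sval f j)] = \bigcup_k cell k.
  apply/seteqP; split => x.
    move=> [j Pj <-]; have [k [kn kj]] := partition_cover a0 an (svalP j).
    by exists k => //; split => //; split => //; exists j.
  move=> [k _] [[kn [j [kj Pj]]] kx].
  have [a0k ak1] := partition_cell_bounds ainc a0 an kn.
  have xJ : 0 <= x < 1.
    by case/andP: (kx) => h1 h2; rewrite (le_trans a0k h1) (lt_le_trans h2 ak1).
  by exists (exist _ x xJ) => //=; rewrite (acst k (exist _ x xJ) j kn kx kj).
apply: bigcupT_measurable => k; have [hk|nhk] := pselect (hit k).
  rewrite (_ : cell k = `[a k, a k.+1[%classic); first exact: measurable_itv.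
  by apply/seteqP; split => x /=; rewrite in_itv /=; [case | split].
by rewrite (_ : cell k = set0) //; apply/seteqP; split => x // [].
Qed.

Lemma step_finite_range :
  exists (n : nat) (xk : nat -> T), forall j : J R, exists2 k, (k < n)%N & sval f j = xk k.
Proof.
case: (svalP f) => n [a [a0 [an [ainc acst]]]].
exists n, (fun k => sval f (to_J (a k))) => j.
have [k [kn kj]] := partition_cover a0 an (svalP j).
exists k => //; apply: (acst k j _ kn kj).
have [a0k ak1] := partition_cell_bounds ainc a0 an kn.
have akJ : 0 <= a k < 1 by rewrite a0k (lt_le_trans (ainc k kn) ak1).
by rewrite /to_J insubdK ?lexx ?ainc // inE.
Qed.

End StepFunctions.

Section UnitInterval.
Variable R : realType.

Definition unit_itv : set R := `[0, 1[%classic.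

Lemma unit_itv_measurable : measurable unit_itv.
Proof. exact: measurable_itv. Qed.

Lemma lebesgue_unit_itv : lebesgue_measure unit_itv = 1%E.
Proof. by rewrite lebesgue_measure_itv /= lte_fin ltr01 oppr0 adde0. Qed.

Lemma to_JK x : unit_itv x -> sval (to_J x) = x.
Proof. by rewrite /unit_itv /= in_itv /= => x01; rewrite insubdK. Qed.

Lemma sval_unit_itv (j : J R) : unit_itv (sval j).
Proof. by rewrite /unit_itv /= in_itv /=; exact: (svalP j). Qed.

Lemma to_J_sval (j : J R) : to_J (sval j) = j.
Proof. by apply: val_inj; rewrite /= to_JK //; exact: sval_unit_itv. Qed.

Definition lift_step (T : Type) (f : Gbul R T) (x : R) : T := sval f (to_J x).

Lemma lift_step_measurable (T : Type) (f : Gbul R T) (phi : T -> R) :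
  measurable_fun unit_itv (fun x => phi (lift_step f x)).
Proof.
move=> _ Y mY.
rewrite (_ : _ `&` _ = sval @` [set j : J R | Y (phi (sval f j))]).
  exact: (step_preimage_measurable f (fun t => Y (phi t))).
apply/seteqP; split => x.
  by move=> [x01 /= Yx]; exists (to_J x); rewrite ?to_JK.
move=> [j Yj <-]; split; first exact: sval_unit_itv.
by rewrite /= /lift_step to_J_sval.
Qed.

Lemma bounded_unit_integrable (F : R -> R) (M : R) :
  measurable_fun unit_itv F -> (forall x, `|F x| <= M) ->
  lebesgue_measure.-integrable unit_itv (EFin \o F).
Proof.
move=> mF FM; apply: measurable_bounded_integrable => //.
- exact: unit_itv_measurable.
- by have := lebesgue_unit_itv; rewrite /= => ->; rewrite ltry.
exists M; split; first by rewrite num_real.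
by move=> y My x _; apply: le_trans (FM _) (ltW My).
Qed.

Lemma integral_dist_le (F1 F2 : R -> R) (M c K : R) (B : set R) :
  measurable_fun unit_itv F1 -> measurable_fun unit_itv F2 ->
  (forall x, `|F1 x| <= M) -> (forall x, `|F2 x| <= M) ->
  measurable B -> 0 <= c -> 0 <= K ->
  (forall x, unit_itv x -> `|F1 x - F2 x| <= c + K * \1_B x) ->
  (`|fine (\int[lebesgue_measure]_(x in unit_itv) (F1 x)%:E)
     - fine (\int[lebesgue_measure]_(x in unit_itv) (F2 x)%:E)|%:E
   <= c%:E + K%:E * lebesgue_measure (B `&` unit_itv))%E.
Proof.
move=> m1 m2 b1 b2 mB c0 K0 H.
have mU := unit_itv_measurable.
have i1 := bounded_unit_integrable m1 b1.
have i2 := bounded_unit_integrable m2 b2.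
have mIB : measurable_fun unit_itv (fun x => K * \1_B x).
  by apply: measurable_funM => //; exact: measurable_indic.
rewrite -abse_EFin EFinB !fineK; try exact: integrable_fin_num.
rewrite -integralB_EFin //.
under eq_integral do rewrite -EFinB.
have m12 : measurable_fun unit_itv (EFin \o (fun x => F1 x - F2 x)).
  by apply/measurable_EFinP; exact: measurable_funB.
apply: le_trans; first by apply: le_abse_integral.
apply: (@le_trans _ _ (\int[lebesgue_measure]_(x in unit_itv) (c + K * \1_B x)%:E)%E).
  apply: ge0_le_integral => //.
  - exact: measurableT_comp.
  - by apply/measurable_EFinP; exact: measurable_funD.
under eq_integral do rewrite EFinD EFinM.
rewrite ge0_integralD //; last 2 first.
- by move=> x _; rewrite -EFinM lee_fin mulr_ge0.
- by apply/measurable_EFinP; exact: mIB.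
rewrite ge0_integralZl_EFin //; last by apply/measurable_EFinP; exact: measurable_indic.
rewrite integral_indic // integral_cst //.
by have := lebesgue_unit_itv; rewrite /= => ->; rewrite mule1.
Qed.

End UnitInterval.

Section StepMean.
Variables (R : realType) (G : topologicalType) (phi : G -> R).

Definition step_mean (f : Gbul R G) : R :=
  fine (\int[lebesgue_measure]_(x in @unit_itv R) (phi (lift_step f x))%:E)%E.

Lemma step_mean_cst (x : G) : step_mean (cbul R x) = phi x.
Proof.
rewrite /step_mean /lift_step /= integral_cst; last exact: unit_itv_measurable.
by have := @lebesgue_unit_itv R; rewrite /= => ->; rewrite mule1.
Qed.

Variable M : R.
Hypothesis phi_bdd : forall x, `|phi x| <= M.

(* Compare the mean of phi o f with the mean 0 of the zero function. *)
Lemma step_mean_bounded (f : Gbul R G) : `|step_mean f| <= M.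
Proof.
have M0 : 0 <= M by apply: le_trans (phi_bdd (sval f (J_zero R))).
have := @integral_dist_le R (fun x => phi (lift_step f x)) (fun _ => 0) M M 0 set0
  (lift_step_measurable f phi) (measurable_cst _) (fun x => phi_bdd (lift_step f x))
  (fun x => ltac:(by rewrite normr0)) measurable0 M0 (lexx 0).
rewrite mul0e adde0 lee_fin integral_cst ?mul0e ?subr0; last exact: unit_itv_measurable.
by apply => x _; rewrite subr0 mul0r addr0.
Qed.

Variables (op : G -> G -> G) (e : G).
Hypotheses (op_cont : continuous (fun p : G * G => op p.1 p.2))
  (phi_cont : continuous phi) (op_e : forall x, op x e = x).

(* Uniformly over the finitely many values of a step function f, the map
   v |-> phi(x (+) v) stays delta-close to phi(x) on a neighbourhood of e. *)
Lemma step_uniform_nbhs (f : Gbul R G) (delta : R) : 0 < delta ->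
  exists V : set G, [/\ open V, V e &
    forall (j : J R) v, V v -> `|phi (sval f j) - phi (op (sval f j) v)| < delta].
Proof.
move=> d0; have [n [xk fxk]] := step_finite_range f.
have near_e (k : 'I_n) : \forall v \near e, `|phi (xk k) - phi (op (xk k) v)| < delta.
  have op_xk : {for e, continuous (fun v => phi (op (xk k) v))}.
    apply: (@continuous_comp _ _ _ (op (xk k)) phi); last exact: phi_cont.
    apply: (@continuous_comp _ _ _ (pair (xk k)) (fun p : G * G => op p.1 p.2)).
      exact: (cvg_pair (cvg_cst (xk k)) cvg_id).
    exact: op_cont.
  by move/cvgrPdist_lt: op_xk => /(_ _ d0); rewrite op_e.
have := @filter_forall G _ _ (nbhs e) (nbhs_filter e) near_e.
rewrite nbhsE /= => -[V [oV Ve] VP].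
exists V; split => // j v Vv; have [k kn ->] := fxk j.
exact: (VP v Vv (Ordinal kn)).
Qed.

Lemma step_mean_continuous : Gbul_continuous op e step_mean.
Proof.
move=> f delta d0.
have M0 : 0 <= M by apply: le_trans (phi_bdd (sval f (J_zero R))).
have d2 : 0 < delta / 2 by rewrite divr_gt0.
have [V [oV Ve VP]] := step_uniform_nbhs f d2.
pose eps := delta / (4 * (M + 1)).
have M1 : 0 < 4 * (M + 1) by rewrite mulr_gt0 // ltr_wpDl.
have eps0 : 0 < eps by rewrite divr_gt0.
exists V, eps; do 3!split => //; move=> g h Og fgh.
pose B := sval @` [set j : J R | ~ V (sval g j)].
have BU : B `&` @unit_itv R = B by apply/setIidl => _ [j _ <-]; exact: sval_unit_itv.
(* off B the oscillation is < delta/2; on B it is at most 2M *)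
have pointwise x : @unit_itv R x ->
    `|phi (lift_step h x) - phi (lift_step f x)| <= delta / 2 + 2 * M * \1_B x.
  move=> x01; rewrite /lift_step fgh.
  have [Vg|nVg] := pselect (V (sval g (to_J x))).
    rewrite distrC; apply: le_trans (ltW (VP _ _ Vg)) _.
    by rewrite lerDl mulr_ge0 ?mulr_ge0 ?indic_ge0.
  rewrite indicE mem_set ?mulr1; last by exists (to_J x); rewrite ?to_JK.
  set y := sval f (to_J x); set z := op y (sval g (to_J x)).
  have := ler_normB (phi z) (phi y); have := phi_bdd z; have := phi_bdd y.
  lra.
have := integral_dist_le (lift_step_measurable h phi) (lift_step_measurable f phi)
  (fun x => phi_bdd (lift_step h x)) (fun x => phi_bdd (lift_step f x))
  (step_preimage_measurable g (~` V)) (ltW d2) (mulr_ge0 (ler0n _ 2) M0) pointwise.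
rewrite BU -lte_fin => /le_lt_trans; apply.
apply: (@le_lt_trans _ _ ((delta / 2)%:E + (2 * M)%:E * eps%:E)%E).
  by apply/leeD2l/lee_wpmul2l; [rewrite lee_fin mulr_ge0|exact: ltW Og].
have eps_def : eps * (4 * (M + 1)) = delta by rewrite divfK ?gt_eqF.
by rewrite -EFinM -EFinD lte_fin -eps_def; nra.
Qed.

End StepMean.

Theorem mainTheorem7 (R : realType) (G : topologicalType)
  (op : G -> G -> G) (e : G) (inv : G -> G)
  (HG : is_top_gyrogroup op e inv)
  (phi : G -> R) (phi_cont : continuous phi)
  (phi_bdd : exists M : R, forall x, `|phi x| <= M) :
  exists Phi : Gbul R G -> R,
    (exists M : R, forall f, `|Phi f| <= M) /\
    Gbul_continuous op e Phi /\
    (forall x : G, Phi (cbul R x) = phi x).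
Proof.
have [[e_id _] [_ [op_cont _]]] := HG.
have [M phiM] := phi_bdd.
exists (step_mean phi); split; last split.
- by exists M; exact: step_mean_bounded.
- exact: (step_mean_continuous phiM op_cont phi_cont (fun x => proj2 (e_id x))).
- exact: step_mean_cst.
Qed.
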